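(* Let $n\ge 2$, $s\in\mathbb{R}$, and let $u\in C^2((0,\infty))$. Then $$u(r)-u(r\tau)+\big(u(r)-u(\tfrac{r}{\tau})\big)\tau^{-n+2s}\le 0\quad\text{for all } r>0,\ \tau\ge1$$ holds if and only if $$u''(r)+(n-2s+1)\frac{u'(r)}{r}\ge 0\quad\text{for all } r>0.$$
   Context: $u$ is viewed as a radial function $x\mapsto u(|x|)$ on $\mathbb{R}^n$. *)

From Stdlib Require Import Reals.
From Coquelicot Require Import Coquelicot.
Open Scope R_scope.

Definition C2_pos (u : R -> R) : Prop :=
  forall r : R, 0 < r ->
    ex_derive u r /\ ex_derive (Derive u) r /\
    continuous (Derive_n u 2) r.

From Stdlib Require Import Reals Lra.
From Coquelicot Require Import Coquelicot.
Open Scope R_scope.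

(* With k = n - 2s + 1, the operator u'' + k u'/r equals r^-k (r^k u')'.
   Two applications of the mean value theorem, first in the dilation factor
   and then to the flux r^k u', write the left-hand side of the first
   inequality as -Q (u'' + k u'/r)(d) with Q >= 0 and d in [r/tau, r tau],
   and Q > 0 as soon as tau > 1.  This gives one implication directly; for
   the other, if the operator were negative at some r, it would be negative
   near r by continuity, and a dilation factor tau close to 1 would make the
   left-hand side positive. *)

Definition radial_op (k : R) (u : R -> R) (r : R) : R :=
  Derive_n u 2 r + k * (Derive u r / r).

Definition radial_flux (k : R) (u : R -> R) (r : R) : R :=
  Rpower r k * Derive u r.

Definition scaling_defect (k : R) (u : R -> R) (r tau : R) : R :=
  u r - u (r * tau) + (u r - u (r / tau)) * Rpower tau (1 - k).

Lemma MVT_le (f df : R -> R) (a b : R) :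
  a <= b -> (forall x, a <= x <= b -> is_derive f x (df x)) ->
  exists c, a <= c <= b /\ f b - f a = df c * (b - a).
Proof.
  intros hab hf.
  destruct (MVT_gen f a b df) as [c [hc e]].
  - intros x hx. apply hf. rewrite Rmin_left, Rmax_right in hx; lra.
  - intros x hx. apply continuity_pt_filterlim, (ex_derive_continuous f x).
    eexists. apply hf. rewrite Rmin_left, Rmax_right in hx; lra.
  - exists c. rewrite Rmin_left, Rmax_right in hc by lra. auto.
Qed.

Lemma Rpower_div (x y k : R) :
  0 < x -> 0 < y -> Rpower (x / y) k = Rpower x k / Rpower y k.
Proof.
  intros hx hy. unfold Rpower, Rdiv.
  rewrite ln_mult, ln_Rinv, <- exp_Ropp, <- exp_plus
    by auto using Rinv_0_lt_compat.
  f_equal. ring.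
Qed.

Lemma Rpower_1_minus (tau k : R) :
  0 < tau -> Rpower tau (1 - k) = tau / Rpower tau k.
Proof.
  intros ht. unfold Rminus. rewrite Rpower_plus, Rpower_1, Rpower_Ropp by exact ht.
  reflexivity.
Qed.

Lemma radial_op_continuous (k : R) (u : R -> R) (r : R) :
  C2_pos u -> 0 < r -> continuous (radial_op k u) r.
Proof.
  intros hC hr. destruct (hC r hr) as [_ [hd2 hcont]].
  apply (continuous_plus (Derive_n u 2) (fun x => scal k (mult (Derive u x) (/ x)))).
  - exact hcont.
  - apply (continuous_scal_r k (fun x => mult (Derive u x) (/ x))).
    apply (continuous_mult (K := R_AbsRing) (Derive u) Rinv).
    + exact (ex_derive_continuous _ _ hd2).
    + apply continuous_Rinv. lra.
Qed.

Lemma dilation_within (r eps : R) :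
  0 < r -> 0 < eps ->
  exists tau, 1 < tau /\ forall x, r / tau <= x <= r * tau -> Rabs (x - r) < eps.
Proof.
  intros hr heps.
  set (tau := 1 + eps / (2 * r)).
  assert (ht : 1 < tau) by (assert (0 < eps / (2 * r)) by
    (apply Rdiv_lt_0_compat; lra); unfold tau; lra).
  exists tau. split; [exact ht|]. intros x [hlo hhi].
  assert (hup : r * tau = r + eps / 2) by (unfold tau; field; lra).
  assert (hdown : r / tau = r - eps / 2 / tau) by (unfold tau; field; lra).
  assert (hw : eps / 2 / tau * tau = eps / 2) by (field; lra).
  assert (0 < eps / 2 / tau) by (apply Rdiv_lt_0_compat; lra).
  apply Rabs_def1; nra.
Qed.

Section ScalingDefect.

Variables (k : R) (u : R -> R).
Hypothesis hu : forall x, 0 < x -> ex_derive u x /\ ex_derive (Derive u) x.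

Lemma is_derive_radial_flux (r : R) :
  0 < r -> is_derive (radial_flux k u) r (Rpower r k * radial_op k u r).
Proof.
  intros hr. unfold radial_flux, radial_op, Rpower.
  auto_derive.
  - split; [exact hr|]. split; [apply hu, hr|exact I].
  - change (fun x => Derive u x) with (Derive u).
    change (Derive_n u 2 r) with (Derive (Derive u) r). field. lra.
Qed.

Lemma radial_flux_increment (a b : R) :
  0 < a <= b ->
  exists d, a <= d <= b /\
    radial_flux k u b - radial_flux k u a = Rpower d k * radial_op k u d * (b - a).
Proof.
  intros hab. apply MVT_le; [lra|].
  intros x hx. apply is_derive_radial_flux. lra.
Qed.

Lemma scaling_defect_flux_increment (r tau : R) :
  0 < r -> 1 <= tau ->
  exists c, 1 <= c <= tau /\
    scaling_defect k u r tau =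
    - ((tau - 1) * (r / Rpower (r * c) k)
        * (radial_flux k u (r * c) - radial_flux k u (r * c / tau))).
Proof.
  intros hr ht.
  set (T := Rpower tau (1 - k)).
  set (H := fun sg => (u (r * sg) - u r) - T * (u (r * sg / tau) - u (r / tau))).
  set (dH := fun sg => r * Derive u (r * sg) - T * (r / tau) * Derive u (r * sg / tau)).
  destruct (MVT_le H dH 1 tau ht) as [c [hc hHc]].
  { intros sg hsg. unfold H, dH. auto_derive.
    - split; [apply hu; nra|]. split; [|exact I].
      apply hu. apply Rdiv_lt_0_compat; nra.
    - change (fun x => u x) with u. unfold Rdiv. ring. }
  exists c. split; [exact hc|].
  assert (hrc : 0 < r * c) by nra.
  assert (hflux : dH c = r / Rpower (r * c) k
                    * (radial_flux k u (r * c) - radial_flux k u (r * c / tau))).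
  { unfold dH, T, radial_flux.
    rewrite Rpower_1_minus, Rpower_div by lra.
    assert (Rpower (r * c) k > 0) by apply exp_pos.
    assert (Rpower tau k > 0) by apply exp_pos.
    field. lra. }
  assert (hH : H tau - H 1 = - scaling_defect k u r tau).
  { unfold H, scaling_defect. fold T.
    replace (r * tau / tau) with r by (field; lra). rewrite Rmult_1_r. ring. }
  rewrite hflux in hHc.
  replace (scaling_defect k u r tau) with (- (H tau - H 1)) by lra.
  rewrite hHc. ring.
Qed.

Lemma scaling_defect_mean_value (r tau : R) :
  0 < r -> 1 <= tau ->
  exists d Q, r / tau <= d <= r * tau /\ 0 <= Q /\ (1 < tau -> 0 < Q) /\
    scaling_defect k u r tau = - (Q * radial_op k u d).
Proof.
  intros hr ht.
  destruct (scaling_defect_flux_increment r tau hr ht) as [c [hc hdef]].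
  assert (hrc : 0 < r * c) by nra.
  assert (hrc_pos : 0 < r * c / tau) by (apply Rdiv_lt_0_compat; lra).
  assert (hgap : r * c - r * c / tau = r * c * (tau - 1) / tau) by (field; lra).
  assert (hrc_le : r * c / tau <= r * c).
  { assert (0 <= r * c * (tau - 1) / tau) by (apply Rdiv_le_0_compat; nra). lra. }
  destruct (radial_flux_increment (r * c / tau) (r * c)) as [d [hd hinc]]; [lra|].
  exists d, ((tau - 1) * (r / Rpower (r * c) k) * Rpower d k * (r * c - r * c / tau)).
  assert (hpow : 0 < Rpower (r * c) k /\ 0 < Rpower d k) by (split; apply exp_pos).
  assert (hw : 0 < r / Rpower (r * c) k) by (apply Rdiv_lt_0_compat; lra).
  repeat split.
  - apply Rle_trans with (r * c / tau); [|lra].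
    unfold Rdiv. apply Rmult_le_compat_r; [left; apply Rinv_0_lt_compat|]; nra.
  - nra.
  - apply Rmult_le_pos; [apply Rmult_le_pos; [apply Rmult_le_pos|]|]; lra.
  - intros ht1.
    assert (0 < r * c - r * c / tau) by (rewrite hgap; apply Rdiv_lt_0_compat; nra).
    apply Rmult_lt_0_compat; [apply Rmult_lt_0_compat; [apply Rmult_lt_0_compat|]|]; lra.
  - rewrite hdef, hinc. ring.
Qed.

Lemma scaling_defect_nonpos :
  (forall x, 0 < x -> 0 <= radial_op k u x) ->
  forall r tau, 0 < r -> 1 <= tau -> scaling_defect k u r tau <= 0.
Proof.
  intros hL r tau hr ht.
  destruct (scaling_defect_mean_value r tau hr ht) as [d [Q [hd [hQ [_ ->]]]]].
  assert (0 < d) by (apply Rlt_le_trans with (r / tau); [apply Rdiv_lt_0_compat|]; lra).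
  assert (0 <= radial_op k u d) by auto.
  nra.
Qed.

Lemma radial_op_nonneg :
  (forall x, 0 < x -> continuous (radial_op k u) x) ->
  (forall r tau, 0 < r -> 1 <= tau -> scaling_defect k u r tau <= 0) ->
  forall r, 0 < r -> 0 <= radial_op k u r.
Proof.
  intros hcont hdef r hr.
  destruct (Rle_lt_dec 0 (radial_op k u r)) as [|hneg]; [assumption|exfalso].
  destruct (hcont r hr (fun y => y < 0) (open_lt 0 _ hneg)) as [eps heps].
  destruct (dilation_within r eps hr (cond_pos eps)) as [tau [ht hball]].
  destruct (scaling_defect_mean_value r tau hr (Rlt_le _ _ ht))
    as [d [Q [hd [_ [hQ hval]]]]].
  assert (radial_op k u d < 0) by (apply heps, hball, hd).
  assert (0 < Q) by auto.
  specialize (hdef r tau hr (Rlt_le _ _ ht)).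
  nra.
Qed.

End ScalingDefect.

Theorem theorem1p3 (n : nat) (s : R) (u : R -> R) :
  (2 <= n)%nat -> C2_pos u ->
  ((forall r tau : R, 0 < r -> 1 <= tau ->
      u r - u (r * tau) + (u r - u (r / tau)) * Rpower tau (- INR n + 2 * s) <= 0)
   <->
   (forall r : R, 0 < r ->
      Derive_n u 2 r + (INR n - 2 * s + 1) * (Derive u r / r) >= 0)).
Proof.
  intros _ hC.
  set (k := INR n - 2 * s + 1).
  assert (hu : forall x, 0 < x -> ex_derive u x /\ ex_derive (Derive u) x)
    by (intros x hx; destruct (hC x hx) as [h1 [h2 _]]; auto).
  assert (hexp : - INR n + 2 * s = 1 - k) by (unfold k; ring).
  rewrite hexp. split.
  - intros hdef r hr. apply Rle_ge.
    apply (radial_op_nonneg k u hu); auto.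
    intros x hx. apply radial_op_continuous; assumption.
  - intros hL. apply (scaling_defect_nonpos k u hu).
    intros x hx. apply Rge_le, hL, hx.
Qed.
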